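(* Let $k\ge 2$ and $n=2k+1$. The distance characteristic polynomial of the friendship graph $F^{k}_{n}$ is $$P_D(\lambda)=(\lambda+1)^{n-k-1}(\lambda+3)^{k-1}\bigl[\lambda^{2}-(4k-3)\lambda-2k\bigr].$$ If $\lambda_1\ge\lambda_2\ge\cdots\ge\lambda_n$ is the distance spectrum of $F^{k}_{n}$, then $-1<\lambda_2<-\frac12$, $\lambda_3=-1$ and $\lambda_n=-3$.
   Context: For a connected graph $G$, the distance matrix $D(G)$ has as $(i,j)$-entry the distance between the $i$-th and $j$-th vertices; $P_D(\lambda)=\det(\lambda I-D(G))$ and the distance spectrum consists of the eigenvalues of $D(G)$. The friendship graph $F^{k}_{n}$ ($n=2k+1$) is obtained by taking $k$ copies of $C_3$ and identifying one vertex of each copy into a single common vertex. *)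

From mathcomp Require Import all_boot all_order all_algebra.
Set Implicit Arguments. Unset Strict Implicit. Unset Printing Implicit Defensive.
Import Order.TTheory GRing.Theory Num.Theory.
Local Open Scope ring_scope.

Fixpoint walk (T : finType) (e : rel T) (m : nat) (x y : T) : bool :=
  match m with
  | 0 => x == y
  | m'.+1 => walk e m' x y || [exists z, e x z && walk e m' z y]
  end.

(* Graph distance: least m with a walk of length <= m from x to y
   (for a connected graph on #|T| vertices, it is < #|T|). *)
Definition gdist (T : finType) (e : rel T) (x y : T) : nat :=
  find (fun m => walk e m x y) (iota 0 #|T|).

Definition dist_matrix (R : nzRingType) (n : nat) (e : rel 'I_n) : 'M[R]_n :=
  \matrix_(i, j) (gdist e i j)%:R.

(* Friendship graph F^k_n, n = 2k+1: vertex 0 is the common vertex,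
   triangle t (t < k) is {0, 2t+1, 2t+2}. *)
Definition friendship_rel (k : nat) : rel 'I_(2 * k + 1) :=
  fun i j => (i != j) &&
    [|| (val i == 0)%N, (val j == 0)%N | ((val i).-1 %/ 2 == (val j).-1 %/ 2)%N].

(* s is the distance spectrum (eigenvalues with multiplicity, i.e. roots of
   the characteristic polynomial) listed in nonincreasing order. *)
Definition is_sorted_spectrum (R : numDomainType) (n : nat) (A : 'M[R]_n)
    (s : seq R) : Prop :=
  [/\ size s = n, sorted (fun x y => y <= x) s &
      char_poly A = \prod_(x <- s) ('X - x%:P)].
Arguments friendship_rel : clear implicits.
Arguments dist_matrix R n e : clear implicits.

From mathcomp Require Import all_boot all_order all_algebra.
From mathcomp Require Import zify ring lra.
Set Implicit Arguments. Unset Strict Implicit. Unset Printing Implicit Defensive.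
Import Order.TTheory GRing.Theory Num.Theory.
Local Open Scope ring_scope.

(* Inside triangle t the vector e_(2t+2) - e_(2t+1) is an eigenvector of the distance
   matrix D for -1, and the difference of the indicator vectors of two consecutive
   triangles is one for -3. Together with e_0 and
   e_1 these k + (k - 1) vectors give, after a small correction making the change of
   basis P upper triangular, an identity (X I - D) P = P W in which W is lower
   triangular except for its (0, 1) entry. Hence char_poly D = det W is (X + 1)^k
   (X + 3)^(k - 1) times the quadratic of the 2 x 2 corner. The quadratic has one root
   above 0 and one in (-1, -1/2), and since the characteristic polynomial determines
   the multiset of eigenvalues, the sorted spectrum is unique. *)

(* Decides by [lia] every boolean test of the goal that arithmetic can settle and
   case-splits on the others. *)
Ltac case_bool b :=
  lazymatch b with
  | true => fail
  | false => fail
  | _ => first [ rewrite (_ : b = true); last by apply/idP; lia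
               | rewrite (_ : b = false); last by apply/negbTE; lia
               | let E := fresh "E" in case E : b;
                   [ have {}E : b := E | have {}E : ~~ b by rewrite E ] ]
  end.

Ltac case_ifs :=
  repeat match goal with
  | |- context [if ?b then _ else _] => case_bool b
  | |- context [nat_of_bool ?b] => case_bool b
  end.

Section GraphDistance.
Variables (T : finType) (e : rel T).

Lemma walk1 x y : walk e 1 x y = (x == y) || e x y.
Proof.
congr (_ || _); apply/existsP/idP => [[z /andP [exz /eqP <-]] // | exy].
by exists y; rewrite exy eqxx.
Qed.

Lemma gdist_id x : gdist e x x = 0%N.
Proof.
rewrite /gdist; have: (0 < #|T|)%N by apply/card_gt0P; exists x.
by case: #|T| => //= N _; rewrite eqxx.
Qed.

Lemma gdist_edge x y : x != y -> e x y -> gdist e x y = 1%N.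
Proof.
move=> nxy exy; rewrite /gdist.
have: (1 < #|T|)%N by apply/card_gt1P; exists x, y.
case: #|T| => [|[|N]] // _ /=.
change ((x == y) || [exists z, e x z && (z == y)]) with (walk e 1 x y).
by rewrite walk1 (negbTE nxy) exy.
Qed.

Lemma gdist_two_step x y z :
  x != y -> ~~ e x y -> e x z -> e z y -> gdist e x y = 2%N.
Proof.
move=> nxy nexy exz ezy; rewrite /gdist.
have nzx : z != x by apply: contraNneq nexy => <-.
have nzy : z != y by apply: contraNneq nexy => <-.
have: (2 < #|T|)%N by apply/card_gt2P; exists x, y, z; rewrite !inE nxy (eq_sym y) nzy nzx.
case: #|T| => [|[|[|N]]] // _ /=.
change ((x == y) || [exists z, e x z && (z == y)]) with (walk e 1 x y).
change [exists z, e x z && ((z == y) || [exists z0, e z z0 && (z0 == y)])]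
  with [exists z, e x z && walk e 1 z y].
rewrite walk1 (negbTE nxy) (negbTE nexy) /=.
suff -> : [exists z, e x z && walk e 1 z y] by [].
by apply/existsP; exists z; rewrite walk1 exz ezy orbT.
Qed.
End GraphDistance.

Section ColumnRowOperations.
Variable S : comPzRingType.

(* [colop g j] and [rowop g i] are the j-th column of [g *m P] and the i-th row of
   [P *m g] for P = [change_basis_mx]: column 2t+2 of P is e_(2t+2) - e_(2t+1), and
   column 2t+1 (t > 0) is 2 e_(2t+1) - e_(2t) - e_(2t-1), the sum of a (-3)- and a
   (-1)-eigenvector of the friendship distance matrix. *)
Definition colop (g : nat -> S) (j : nat) : S :=
  if odd j then (if (2 < j)%N then 2 * g j - g j.-1 - g j.-2 else g j)
  else if (0 < j)%N then g j - g j.-1 else g j.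

Definition rowop (g : nat -> S) (i : nat) : S :=
  if odd i then (if (2 < i)%N then 2 * g i else g i) - g i.+1 - g i.+2
  else if (0 < i)%N then g i - g i.+1 else g i.

Lemma eq_colop g h j :
  (forall j', (j' <= j)%N -> g j' = h j') -> colop g j = colop h j.
Proof.
move=> gh; have g0 := gh j; have g1 := gh j.-1; have g2 := gh j.-2.
by rewrite /colop g0 ?g1 ?g2 //; lia.
Qed.

Lemma eq_rowop g h i :
  (forall i', (i <= i' <= i.+2)%N -> g i' = h i') -> rowop g i = rowop h i.
Proof.
move=> gh; have g0 := gh i; have g1 := gh i.+1; have g2 := gh i.+2.
by rewrite /rowop g0 ?g1 ?g2 //; lia.
Qed.

Lemma colop_sum (I : Type) (r : seq I) (c : I -> S) (g : I -> nat -> S) j :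
  colop (fun j' => \sum_(l <- r) c l * g l j') j = \sum_(l <- r) c l * colop (g l) j.
Proof.
rewrite /colop; case: ifP => _; [case: ifP => _ | case: ifP => _].
all: rewrite ?mulr_sumr -?sumrB; apply: eq_bigr => l _; ring.
Qed.

Lemma rowop_sum (I : Type) (r : seq I) (c : I -> S) (g : I -> nat -> S) i :
  rowop (fun i' => \sum_(l <- r) g l i' * c l) i = \sum_(l <- r) rowop (g l) i * c l.
Proof.
rewrite /rowop; case: ifP => _; [case: ifP => _ | case: ifP => _].
all: rewrite ?mulr_sumr -?sumrB; apply: eq_bigr => l _; ring.
Qed.
End ColumnRowOperations.

Lemma big_ord_mul_eq (S : pzSemiRingType) m (F : nat -> S) a :
  \sum_(l < m) F l * (l == a :> nat)%:R = if (a < m)%N then F a else 0.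
Proof.
case: ifP => [a_lt_m | a_ge_m].
  rewrite (bigD1 (Ordinal a_lt_m)) //= eqxx mulr1 big1 ?addr0 // => l l_neq_a.
  by rewrite (_ : (l == a :> nat) = false) ?mulr0 //; apply: negbTE.
rewrite big1 // => l _; case: eqP => [l_eq_a|]; last by rewrite mulr0.
by move: a_ge_m; rewrite -l_eq_a ltn_ord.
Qed.

Definition change_basis_mx (S : comPzRingType) (m : nat) : 'M[S]_m :=
  \matrix_(l, j) colop (fun j' => (l == j' :> nat)%:R) j.

Section ChangeBasis.
Variables (S : comPzRingType) (m : nat).
Local Notation P := (change_basis_mx S m).

Lemma change_basis_mxE (l j : 'I_m) : P l j = rowop (fun i => (i == j :> nat)%:R) l.
Proof. by rewrite mxE /colop /rowop; case_ifs; try (exfalso; lia); rewrite /=; ring. Qed.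

Lemma mul_mx_change_basis (f : nat -> nat -> S) (i j : 'I_m) :
  (\matrix_(i, j) f i j *m P) i j = colop (f i) j.
Proof.
rewrite !mxE; under eq_bigr do rewrite !mxE.
rewrite -colop_sum; apply: eq_colop => j' le_j'j.
by rewrite big_ord_mul_eq (leq_ltn_trans le_j'j (ltn_ord j)).
Qed.

Lemma mul_change_basis_mx (f : nat -> nat -> S) (i j : 'I_m) :
  f m j = 0 -> f m.+1 j = 0 ->
  (P *m \matrix_(i, j) f i j) i j = rowop (fun i' => f i' j) i.
Proof.
move=> f_m f_m1; rewrite !mxE; under eq_bigr do rewrite change_basis_mxE mxE.
rewrite -rowop_sum; apply: eq_rowop => i' /andP [_ le_i'i2].
under eq_bigr do rewrite mulrC eq_sym.
rewrite (big_ord_mul_eq _ (fun l => f l j)); case: ltnP => // ge_i'm.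
by have [->|->] : i' = m \/ i' = m.+1 by (have := ltn_ord i; lia).
Qed.
End ChangeBasis.

Lemma det_change_basis_mx_neq0 (S : idomainType) m :
  2 != 0 :> S -> \det (change_basis_mx S m) != 0.
Proof.
move=> two_neq0; rewrite -det_tr det_trig.
  apply/prodf_neq0 => j _; rewrite !mxE /colop.
  by case_ifs; try (exfalso; lia); rewrite /= ?mulr1 ?subr0 ?oner_neq0.
apply/is_trig_mxP => i j lt_ij; rewrite !mxE /colop.
by case_ifs; try (exfalso; lia); rewrite /=; ring.
Qed.

Lemma det_trig_except_01 (R : comPzRingType) m (A : 'M[R]_m) (i0 i1 : 'I_m) :
  i0 = 0%N :> nat -> i1 = 1%N :> nat ->
  (forall i j : 'I_m, (i < j)%N -> (1 < j)%N -> A i j = 0) ->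
  \det A = (A i0 i0 * A i1 i1 - A i0 i1 * A i1 i0) * \prod_(i < m | (1 < i)%N) A i i.
Proof.
case: m A i0 i1 => [|[|m]] A i0 i1 i0E i1E A_trig; try by case: i1 i1E => [[|[|]]].
have -> : i0 = ord0 by apply/val_inj.
have -> : i1 = lift ord0 ord0 by apply/val_inj.
clear i0 i1 i0E i1E.
set one := lift ord0 ord0.
rewrite (expand_det_row _ ord0) !big_ord_recl big1 ?addr0; last first.
  by move=> j _; rewrite A_trig ?mul0r.
have trig00 : is_trig_mx (row' ord0 (col' ord0 A)).
  apply/is_trig_mxP => i j lt_ij.
  by rewrite !mxE A_trig // !lift0 ltnS // (leq_ltn_trans _ lt_ij).
have trig01 : is_trig_mx (row' ord0 (col' one A)).
  apply/is_trig_mxP => i j lt_ij.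
  have j_gt0 := leq_ltn_trans (leq0n i) lt_ij.
  have lift_j : lift one j = j.+1 :> nat by rewrite /= /bump j_gt0.
  by rewrite !mxE A_trig // lift_j ?lift0 ltnS.
rewrite /cofactor (det_trig trig00) (det_trig trig01) big_ord_recl.
rewrite -[lift ord0 ord0]/one big_ord_recl !mxE.
set P := \prod_(i < m) A (lift ord0 (lift ord0 i)) (lift ord0 (lift ord0 i)).
have P2 : \prod_(i < m.+2 | (1 < i)%N) A i i = P.
  by rewrite big_mkcond !big_ord_recl /= !mul1r.
have P0 : \prod_(i < m) row' ord0 (col' ord0 A) (lift ord0 i) (lift ord0 i) = P.
  by apply: eq_bigr => i _; rewrite !mxE.
have P1 : \prod_(i < m) row' ord0 (col' one A) (lift ord0 i) (lift ord0 i) = P.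
  by apply: eq_bigr => i _; rewrite !mxE; congr (A _ _); apply/val_inj.
have -> : lift one ord0 = ord0 by apply/val_inj.
rewrite P0 P1 P2 -/one [(-1) ^+ _]/= expr0 expr1; ring.
Qed.

Lemma path_nseq (T : Type) (e : rel T) x y m :
  e x y -> e y y -> path e x (nseq m y).
Proof. by move=> exy eyy; elim: m x exy => //= m IHm x ->; apply: IHm. Qed.

Lemma last_nseqS (T : Type) (x y : T) m : last x (nseq m.+1 y) = y.
Proof. by elim: m x => [|m IHm] x //; apply: IHm. Qed.

Lemma prod_XsubC_nseq (R : nzRingType) m (c : R) :
  \prod_(x <- nseq m c) ('X - x%:P) = ('X - c%:P) ^+ m.
Proof. by elim: m => [|m IHm]; rewrite ?big_nil ?expr0 // big_cons IHm exprS. Qed.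

Lemma sorted_spectrum_uniq (R : realFieldType) m (A : 'M[R]_m) s1 s2 :
  is_sorted_spectrum A s1 -> is_sorted_spectrum A s2 -> s1 = s2.
Proof.
move=> [_ sorted1 char1] [_ sorted2 char2].
apply: (sorted_eq ge_trans) sorted1 sorted2 _.
  by move=> x y yx_xy; apply: le_anti; rewrite andbC.
by apply: prod_XsubC_eq; rewrite -char1 -char2.
Qed.

Lemma prod_XsubC_quadratic_roots (R : rcfType) (a b : R) :
  0 <= a ^+ 2 + 4 * b ->
  let d := Num.sqrt (a ^+ 2 + 4 * b) in
  ('X - ((a + d) / 2)%:P) * ('X - ((a - d) / 2)%:P) = 'X ^+ 2 - a%:P * 'X - b%:P.
Proof.
move=> disc_ge0 d; have d2 : d ^+ 2 = a ^+ 2 + 4 * b by rewrite sqr_sqrtr.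
have sum_roots : (a + d) / 2 + (a - d) / 2 = a by field.
have prod_roots : (a + d) / 2 * ((a - d) / 2) = - b.
  by rewrite (_ : _ * _ = (a ^+ 2 - d ^+ 2) / 4); [rewrite d2; field | field].
rewrite -[in RHS]sum_roots (_ : b = - ((a + d) / 2 * ((a - d) / 2))).
  rewrite polyCN polyCM polyCD; ring.
by rewrite prod_roots opprK.
Qed.

Definition friendship_dist (i j : nat) : nat :=
  if i == j then 0%N
  else if [|| i == 0%N, j == 0%N | (i.-1 %/ 2 == j.-1 %/ 2)%N] then 1%N else 2%N.

Lemma gdist_friendship k (i j : 'I_(2 * k + 1)) :
  gdist (friendship_rel k) i j = friendship_dist i j.
Proof.
rewrite /friendship_dist; have [<-|nij] := eqVneq i j; first by rewrite gdist_id eqxx.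
have nij' : (i == j :> nat) = false by apply/negbTE.
rewrite nij'; case: ifP => adj.
  by apply: gdist_edge => //; rewrite /friendship_rel nij.
pose hub : 'I_(2 * k + 1) := Ordinal (ltn_addl (2 * k) (ltn0Sn 0)).
move/negbT: adj; rewrite !negb_or => /and3P [i0 j0 ntri].
apply: (@gdist_two_step _ _ _ _ hub).
- exact: nij.
- by rewrite /friendship_rel nij /= (negbTE i0) (negbTE j0) (negbTE ntri).
- by rewrite /friendship_rel /= orbT andbT; apply: contra i0 => /eqP ->.
- by rewrite /friendship_rel /= andbT; apply: contra j0 => /eqP <-.
Qed.

Definition triangle (i : nat) : nat := i.-1 %/ 2.

Lemma triangle_odd t : triangle (2 * t).+1 = t.
Proof. rewrite /triangle; lia. Qed.

Lemma triangle_even t : triangle (2 * t).+2 = t.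
Proof. rewrite /triangle; lia. Qed.

Lemma triangle_odd_next t : triangle (2 * t).+3 = t.+1.
Proof. rewrite /triangle; lia. Qed.

Lemma triangle_even_next t : triangle (2 * t).+4 = t.+1.
Proof. rewrite /triangle; lia. Qed.

Lemma friendship_vertexP k i : (i < 2 * k + 1)%N ->
  [\/ i = 0%N, exists2 t, (t < k)%N & i = (2 * t).+1
    | exists2 t, (t < k)%N & i = (2 * t).+2].
Proof.
move=> lt_in; have [->|i_gt0] := posnP i; first by constructor 1.
have := divn_eq i 2; rewrite modn2; case: (odd i) => /= i_eq.
  by constructor 2; exists (i %/ 2)%N; lia.
by constructor 3; exists (i %/ 2).-1%N; lia.
Qed.

Section FriendshipMatrices.
Variables (R : comNzRingType) (k : nat).
Local Notation n := (2 * k + 1)%N.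

Definition friendship_charfn (i j : nat) : {poly R} :=
  (if i == j then 'X else 0) - (friendship_dist i j)%:R.

(* W: columns 0 and 1 are the coordinates of (X I - D) e_0 and (X I - D) e_1 in the
   basis of columns of P; the others come from the eigenvector relations. *)
Definition friendship_reduced_fn (i j : nat) : {poly R} :=
  if j == 0%N then
    if i == 0%N then 'X
    else if i == 1%N then - (2 * k)%:R
    else - (k%:R - (triangle i)%:R)
  else if j == 1%N then
    if i == 0%N then -1
    else if i == 1%N then 'X - (4 * k)%:R + 3
    else if i == 2%N then - ((2 * k)%:R - 1)
    else - (2 * (k%:R - (triangle i)%:R))
  else if odd j then
    if i == j then 'X + 3 else if i == j.+1 then 2 else 0
  else if i == j then 'X + 1 else 0.

Lemma colop_charfn_rowop_reduced i j : (i < n)%N -> (j < n)%N ->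
  colop (friendship_charfn i) j = rowop (friendship_reduced_fn^~ j) i.
Proof.
move=> lt_in lt_jn.
case: (friendship_vertexP lt_in) => [->|[s lt_sk ->]|[s lt_sk ->]];
case: (friendship_vertexP lt_jn) => [->|[t lt_tk ->]|[t lt_tk ->]];
rewrite /colop /rowop /friendship_charfn /friendship_reduced_fn /friendship_dist;
case_ifs; rewrite /= ?triangle_odd ?triangle_even ?triangle_odd_next ?triangle_even_next;
try (exfalso; lia);
first [ ring
      | (have -> : s = 0%N by lia); ring
      | (have -> : k = s.+1 by lia); ring ].
Qed.

(* The row operations at the last two vertices read W in rows n and n + 1. *)
Lemma friendship_reduced_fn_out i j : (n <= i <= n.+1)%N -> (j < n)%N ->
  friendship_reduced_fn i j = 0.
Proof.
move=> i_out lt_jn; have tri_i : triangle i = k by rewrite /triangle; lia.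
rewrite /friendship_reduced_fn tri_i; case_ifs; try (exfalso; lia).
all: try (have -> : k = 0%N by lia); by rewrite ?subrr ?mulr0 ?oppr0.
Qed.

Lemma friendship_reduced_fn_diag i : (1 < i)%N ->
  friendship_reduced_fn i i = if odd i then 'X + 3 else 'X + 1.
Proof. by move=> i_gt1; rewrite /friendship_reduced_fn; case_ifs; try (exfalso; lia). Qed.

Lemma prod_friendship_reduced_fn_diag t :
  \prod_(2 <= i < (2 * t).+1) friendship_reduced_fn i i = ('X + 1) ^+ t * ('X + 3) ^+ (t - 1).
Proof.
elim: t => [|t IHt]; first by rewrite big_geq ?mulr1.
rewrite (_ : (2 * t.+1).+1 = (2 * t).+3)%N; last lia.
rewrite big_nat_recr ?friendship_reduced_fn_diag //=; try lia.
rewrite negbK oddM andFb subn1 /=.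
case: t IHt => [_|t IHt]; first by rewrite big_geq // mul1r expr1 expr0 mulr1.
rewrite big_nat_recr ?IHt ?friendship_reduced_fn_diag //; try lia.
rewrite oddS oddM andFb subn1 /= !exprS; ring.
Qed.

Lemma char_poly_mx_friendship :
  char_poly_mx (dist_matrix R n (friendship_rel k)) = \matrix_(i, j) friendship_charfn i j.
Proof.
apply/matrixP => i j; rewrite !mxE gdist_friendship /friendship_charfn polyC_natr.
by rewrite -[nat_of_ord i == j]/(i == j); case: (i == j); rewrite ?mulr1n ?mulr0n.
Qed.

Lemma char_poly_mx_friendship_change_basis :
  char_poly_mx (dist_matrix R n (friendship_rel k)) *m change_basis_mx _ n =
  change_basis_mx _ n *m \matrix_(i, j) friendship_reduced_fn i j.
Proof.
apply/matrixP => i j.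
rewrite char_poly_mx_friendship mul_mx_change_basis mul_change_basis_mx.
- exact: colop_charfn_rowop_reduced.
- by apply: friendship_reduced_fn_out; rewrite ?leqnn ?leqnSn.
- by apply: friendship_reduced_fn_out; rewrite ?leqnSn ?leqnn.
Qed.

Lemma det_friendship_reduced : (0 < k)%N ->
  \det (\matrix_(i, j) friendship_reduced_fn i j : 'M[{poly R}]_n) =
  ('X ^+ 2 - ((4 * k)%:R - 3) * 'X - (2 * k)%:R) * (('X + 1) ^+ k * ('X + 3) ^+ (k - 1)).
Proof.
move=> k_gt0.
have lt0n : (0 < n)%N by lia.
have lt1n : (1 < n)%N by lia.
rewrite (@det_trig_except_01 _ _ _ (Ordinal lt0n) (Ordinal lt1n)) //; last first.
  by move=> i j lt_ij lt1j; rewrite mxE /friendship_reduced_fn; case_ifs; try (exfalso; lia).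
have -> : \prod_(i < n | (1 < i)%N) (\matrix_(i, j) friendship_reduced_fn i j) i i =
          ('X + 1) ^+ k * ('X + 3) ^+ (k - 1).
  under eq_bigr do rewrite mxE.
  rewrite -(big_mkord (fun i => 1 < i)%N (fun i => friendship_reduced_fn i i)).
  rewrite big_mkcond (big_ltn lt0n) (big_ltn lt1n) /= !mul1r.
  rewrite addn1 -prod_friendship_reduced_fn_diag.
  by apply: eq_big_nat => i /andP [lt1i _]; rewrite lt1i.
by rewrite !mxE /friendship_reduced_fn /=; ring.
Qed.
End FriendshipMatrices.

Section FriendshipCharPoly.
Variables (R : numDomainType) (k : nat).
Hypothesis k_gt0 : (0 < k)%N.

Lemma char_poly_friendship :
  char_poly (dist_matrix R (2 * k + 1) (friendship_rel k)) =
  ('X + 1) ^+ k * ('X + 3%:P) ^+ (k - 1) *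
  ('X ^+ 2 - ((4 * k)%:R - 3)%:P * 'X - (2 * k)%:R%:P).
Proof.
have two_neq0 : 2 != 0 :> {poly R} by rewrite -polyC_natr polyC_eq0 pnatr_eq0.
apply: (mulIf (det_change_basis_mx_neq0 (2 * k + 1) two_neq0)).
rewrite -det_mulmx char_poly_mx_friendship_change_basis det_mulmx mulrC.
rewrite det_friendship_reduced // polyCB !polyC_natr; ring.
Qed.
End FriendshipCharPoly.

Section FriendshipSpectrum.
Variables (R : rcfType) (k : nat).
Hypothesis k_ge2 : (2 <= k)%N.

Definition friendship_disc : R := ((4 * k)%:R - 3) ^+ 2 + 4 * (2 * k)%:R.
Definition friendship_root1 : R := ((4 * k)%:R - 3 + Num.sqrt friendship_disc) / 2.
Definition friendship_root2 : R := ((4 * k)%:R - 3 - Num.sqrt friendship_disc) / 2.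
Definition friendship_spectrum : seq R :=
  [:: friendship_root1, friendship_root2 & nseq k (-1) ++ nseq (k - 1) (-3)].

Lemma friendship_disc_ge0 : 0 <= friendship_disc.
Proof. by rewrite /friendship_disc addr_ge0 ?sqr_ge0 ?mulr_ge0. Qed.

(* The quadratic takes the value 2k - 2 > 0 at -1 and -5/4 < 0 at -1/2. *)
Lemma friendship_root2_bounds : -1 < friendship_root2 < - (1 / 2).
Proof.
have k2 : 2 <= k%:R :> R by rewrite (ler_nat R 2 k).
have d2 := sqr_sqrtr friendship_disc_ge0; have d0 := sqrtr_ge0 friendship_disc.
move: d2 d0; rewrite /friendship_root2 /friendship_disc !natrM.
set d := Num.sqrt _ => d2 d0; apply/andP; split; nra.
Qed.

Lemma friendship_spectrumP :
  is_sorted_spectrum (dist_matrix R (2 * k + 1) (friendship_rel k)) friendship_spectrum.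
Proof.
have [lo_gt hi_lt] := andP friendship_root2_bounds.
split.
- by rewrite /= size_cat !size_nseq; lia.
- rewrite /= cat_path; apply/and3P; split.
  + have := sqrtr_ge0 friendship_disc; rewrite /friendship_root1 /friendship_root2; lra.
  + by apply: path_nseq; [exact: ltW | ].
  + rewrite (_ : k = k.-1.+1) ?last_nseqS; last lia.
    by apply: path_nseq; lra.
- rewrite char_poly_friendship; last lia.
  rewrite !big_cons big_cat /= !prod_XsubC_nseq !polyCN !opprK polyC1 mulrA.
  rewrite prod_XsubC_quadratic_roots ?friendship_disc_ge0 //; ring.
Qed.

Lemma friendship_spectrum_nth :
  let s := friendship_spectrum in
  [/\ -1 < s`_1 < - (1 / 2), s`_2 = -1 & s`_(2 * k)%N = -3].
Proof.
split; first exact: friendship_root2_bounds.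
  by rewrite /= nth_cat size_nseq nth_nseq (ltnW k_ge2).
rewrite (_ : 2 * k = (k + (k - 2)).+2)%N; last lia.
rewrite /= nth_cat size_nseq ltnNge leq_addr /= addKn nth_nseq ifT //; lia.
Qed.
End FriendshipSpectrum.

Theorem corollary2p9 (R : rcfType) (k : nat) (hk : (2 <= k)%N) :
  let n := (2 * k + 1)%N in
  let D := dist_matrix R n (friendship_rel k) in
  char_poly D =
    ('X + 1) ^+ (n - k - 1) * ('X + 3%:P) ^+ (k - 1) *
    ('X ^+ 2 - ((4 * k)%:R - 3)%:P * 'X - (2 * k)%:R%:P)
  /\ (exists s : seq R, is_sorted_spectrum D s)
  /\ (forall s : seq R, is_sorted_spectrum D s ->
        [/\ -1 < s`_1 < - (1 / 2), s`_2 = -1 & s`_(n.-1) = -3]).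
Proof.
move=> n D.
have -> : (n - k - 1 = k)%N by rewrite /n; lia.
split; first by apply: char_poly_friendship; lia.
split; first by exists (friendship_spectrum R k); exact: friendship_spectrumP.
move=> s spec_s; rewrite (sorted_spectrum_uniq spec_s (friendship_spectrumP R hk)).
by rewrite /n addn1; exact: friendship_spectrum_nth.
Qed.
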